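(* Consider a fixed user set, i.e. every user receives a recommendation list in every round, so $\delta_i^t = 1$ for all users $u_i \in U$ and all rounds $t = 0,1,\dots,T$, and let the round-$t$ lists $l_i^t$ be those produced by the strategy F-FAST. Assume that for every service $s_j$ with $U_j \neq \emptyset$ the overall appearance probability satisfies $p_j^T > 0$ (so that all quantities below are well defined). Then the sum of the Top-$N$ Fairness values of all users is zero: $$\sum_{u_i \in U} F_i^T = 0 .$$
   Context: Services $S=\{s_1,\dots,s_m\}$ with capacity constraints $c_1,\dots,c_m$ (nonnegative integers: the maximum number of users to whom $s_j$ may be recommended in one round); users $U=\{u_1,\dots,u_n\}$. Each user $u_i$ has a fixed original ranked recommendation list $l_i$ (produced from a predicted rating matrix $R=(r_{i,j})$), and $l(N)_i$ denotes the sub-list of its top $N$ services. For each service $s_j$, $U_j=\{u_i : s_j \in l(N)_i\}$. In round $t$ the system outputs a list $l_i^t$ to user $u_i$; $\delta_i^t\in\{0,1\}$ indicates whether $u_i$ uses the system in round $t$. $In\_tn(s_j,list,N)$ equals $1$ if $s_j$ is in the top-$N$ sub-list of $list$ and $0$ otherwise. Overall appearance probability: $p_j^T = \dfrac{\sum_{u_i\in U_j}\sum_{t=0}^T \delta_i^t\, In\_tn(s_j,l_i^t,N)}{\sum_{u_i\in U_j}\sum_{t=0}^T \delta_i^t}$. Actual appearance probability: $p_{i,j}^T = \dfrac{\sum_{t=0}^T \delta_i^t\, In\_tn(s_j,l_i^t,N)}{\sum_{t=0}^T \delta_i^t}$. Service fairness degree: $F_{i,j}^T = \dfrac{p_{i,j}^T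 - p_j^T}{p_j^T}$. Top-$N$ Fairness: $F_i^T = \sum_{s_j \in l(N)_i} F_{i,j}^T$. F-FAST (one round $T$): start with empty lists and remaining capacities $c_j$. Repeatedly pick the user with the lowest current Top-$N$ Fairness value; go through that user's $l(N)_i$ in rank order and insert into $l_i^T$ the first service $s_j$ with remaining capacity $c_j>0$ (not yet attempted for this user), decrement $c_j$, and update that user's Top-$N$ Fairness value (accounting for the assignment); then re-sort users by their Top-$N$ Fairness and repeat. The round ends when every service in every user's $l(N)_i$ has been attempted or all capacities are exhausted; finally the remaining positions of each $l_i^T$ are filled with the services at positions larger than $N$ in $l_i$, in order. *)

From HB Require Import structures.
From mathcomp Require Import all_boot all_order all_algebra.
Set Implicit Arguments. Unset Strict Implicit. Unset Printing Implicit Defensive.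
Import Order.TTheory GRing.Theory Num.Theory.
Local Open Scope ring_scope.

(* Users are 'I_n, services are 'I_m.
   l i        : the original ranked list of user u_i (a seq of services);
   topN N s   : the sub-list of the first N entries of a list s  (l(N)_i = topN N (l i));
   L t i      : the list l_i^t output to user u_i in round t;
   d t i      : delta_i^t (whether u_i uses the system in round t). *)

Section Fairness.
Variables (R : realFieldType) (n m N : nat).
Variables (l : 'I_n -> seq 'I_m) (d : nat -> 'I_n -> bool)
          (L : nat -> 'I_n -> seq 'I_m) (T : nat).

Definition topN (s : seq 'I_m) : seq 'I_m := take N s.

Definition In_tn (j : 'I_m) (s : seq 'I_m) : bool := j \in topN s.

Definition inU (j : 'I_m) (i : 'I_n) : bool := j \in topN (l i).

Definition overall_prob (j : 'I_m) : R :=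
  (\sum_(i < n | inU j i) \sum_(t < T.+1) ((d t i && In_tn j (L t i)) : nat)%:R)
  / (\sum_(i < n | inU j i) \sum_(t < T.+1) ((d t i) : nat)%:R).

Definition actual_prob (i : 'I_n) (j : 'I_m) : R :=
  (\sum_(t < T.+1) ((d t i && In_tn j (L t i)) : nat)%:R)
  / (\sum_(t < T.+1) ((d t i) : nat)%:R).

Definition fairness_degree (i : 'I_n) (j : 'I_m) : R :=
  (actual_prob i j - overall_prob j) / overall_prob j.

Definition topN_fairness (i : 'I_n) : R :=
  \sum_(j <- topN (l i)) fairness_degree i j.

End Fairness.

(* The F-FAST strategy for one round T, as a (nondeterministic) process. *)

Section FFAST.
Variables (R : realFieldType) (n m N : nat).
Variables (l : 'I_n -> seq 'I_m) (c : 'I_m -> nat) (d : nat -> 'I_n -> bool)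
          (L : nat -> 'I_n -> seq 'I_m) (T : nat).

(* state: (services assigned so far to each user (in insertion order),
           services of l(N)_i already attempted for each user,
           remaining capacities) *)
Definition fstate : Type :=
  (('I_n -> seq 'I_m) * ('I_n -> seq 'I_m) * ('I_m -> nat))%type.

Definition asg (st : fstate) := st.1.1.
Definition att (st : fstate) := st.1.2.
Definition cap (st : fstate) := st.2.

Definition finit : fstate := (fun _ => [::], fun _ => [::], c).

Definition pending (st : fstate) (i : 'I_n) : seq 'I_m :=
  [seq j <- topN N (l i) | j \notin att st i].

Definition cur_fairness (st : fstate) (i : 'I_n) : R :=
  topN_fairness R N l d (fun t => if t == T then asg st else L t) T i.

(* one insertion step for user i: go through l(N)_i in rank order over the
   services not yet attempted; the first one with remaining capacity, s_j, is
   appended to the user's list and c_j is decremented; the services passed over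
   (capacity 0) and s_j become attempted. *)
Definition fupdate (st : fstate) (i : 'I_n) : fstate :=
  let p := pending st i in
  let k := find (fun j => 0 < cap st j)%N p in
  match drop k p with
  | j :: _ =>
      (fun x => if x == i then rcons (asg st x) j else asg st x,
       fun x => if x == i then att st x ++ take k.+1 p else att st x,
       fun y => if y == j then (cap st y).-1 else cap st y)
  | [::] =>
      (asg st,
       fun x => if x == i then att st x ++ p else att st x,
       cap st)
  end.

Definition fterminal (st : fstate) : Prop :=
  (forall i, pending st i = [::]) \/ (forall j, cap st j = 0%N).

(* a step: pick a user with lowest current Top-N Fairness (among users that
   still have services to attempt; ties broken arbitrarily) *)
Definition fstep (st st' : fstate) : Prop :=
  ~ fterminal st /\
  exists i, pending st i != [::] /\
    (forall i', pending st i' != [::] -> cur_fairness st i <= cur_fairness st i') /\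
    st' = fupdate st i.

Inductive freach : fstate -> Prop :=
| freach_init : freach finit
| freach_step st st' : freach st -> fstep st st' -> freach st'.

Definition ffast_round : Prop :=
  exists st, freach st /\ fterminal st /\
    forall i, L T i = asg st i ++ drop N (l i).

End FFAST.

From HB Require Import structures.
From mathcomp Require Import all_boot all_order all_algebra.
Import Order.TTheory GRing.Theory Num.Theory.
Local Open Scope ring_scope.

(* The identity does not depend on how the round lists are
   produced: it holds for arbitrary lists L t i as soon as every user takes
   part in every round. Double counting: since each l(N)_i is duplicate-free, summing over the
      users i and the services j of l(N)_i is the same as summing over the
      services j and the users i of U_j.
   2. With full participation every denominator of p_{i,j}^T equals T+1, and
      p_j^T is the arithmetic mean of the p_{i,j}^T over u_i in U_j.
   3. Deviations from a mean sum to zero, so for each service the sum of the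
      F_{i,j}^T over U_j vanishes (for U_j empty the sum is empty).
   The theorem is then the sum over all services of these zero sums.  The
   hypothesis p_j^T > 0 only makes the quotients meaningful; with the field
   convention x / 0 = 0 the identity holds without it. *)

Lemma sum_topN_exchange (R : nmodType) (n m N : nat) (l : 'I_n -> seq 'I_m)
    (F : 'I_n -> 'I_m -> R) :
  (forall i, uniq (l i)) ->
  \sum_(i < n) \sum_(j <- topN N (l i)) F i j =
  \sum_(j < m) \sum_(i < n | inU N l j i) F i j.
Proof.
move=> l_uniq.
under eq_bigr => i _ do rewrite (big_uniq _ (take_uniq N (l_uniq i))) big_mkcond.
by rewrite exchange_big; apply: eq_bigr => j _; rewrite [RHS]big_mkcond.
Qed.

Section FullParticipation.
Variables (R : realFieldType) (n m N : nat).
Variables (l : 'I_n -> seq 'I_m) (d : nat -> 'I_n -> bool)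
          (L : nat -> 'I_n -> seq 'I_m) (T : nat).
Hypothesis full : forall t i, d t i = true.

Definition hits (i : 'I_n) (j : 'I_m) : R :=
  \sum_(t < T.+1) ((d t i && In_tn N j (L t i)) : nat)%:R.

Definition Uset (j : 'I_m) : {set 'I_n} := [set i | inU N l j i].

Lemma rounds_used (i : 'I_n) : \sum_(t < T.+1) ((d t i : nat)%:R : R) = T.+1%:R.
Proof.
by under eq_bigr => t _ do rewrite full; rewrite sumr_const card_ord.
Qed.

Lemma actual_probE (i : 'I_n) (j : 'I_m) :
  actual_prob R N d L T i j = hits i j / T.+1%:R.
Proof. by rewrite /actual_prob rounds_used. Qed.

Lemma overall_prob_mean (j : 'I_m) :
  (0 < #|Uset j|)%N ->
  \sum_(i < n | inU N l j i) actual_prob R N d L T i j =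
  #|Uset j|%:R * overall_prob R N l d L T j.
Proof.
move=> Uj_gt0.
have cardU : \sum_(i < n | inU N l j i) (T.+1%:R : R) = #|Uset j|%:R * T.+1%:R.
  rewrite sumr_const mulr_natl; congr (_ *+ _).
  by apply: eq_card => i; rewrite inE.
rewrite /overall_prob.
under [X in _ / X]eq_bigr => i _ do rewrite rounds_used.
rewrite (eq_bigr _ (fun i _ => actual_probE i j)) -mulr_suml cardU.
have Uj_neq0 : (#|Uset j|%:R : R) != 0 by rewrite pnatr_eq0 -lt0n.
by rewrite invfM mulrCA [_%:R * (_ * _)]mulrA divff ?mul1r.
Qed.

(* The fairness degrees of the users of U_j balance out: their numerators are
   deviations from the mean p_j^T.  No positivity of p_j^T is needed, since a
   zero numerator gives zero whatever the denominator. *)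
Lemma sum_fairness_degree_service (j : 'I_m) :
  \sum_(i < n | inU N l j i) fairness_degree R N l d L T i j = 0.
Proof.
have [/eqP | Uj_gt0] := posnP #|Uset j|.
  rewrite cards_eq0 => /eqP Uj_empty.
  by rewrite big_pred0 // => i; have := in_set0 i; rewrite -Uj_empty inE.
rewrite /fairness_degree -mulr_suml sumrB sumr_const overall_prob_mean //.
rewrite (eq_card (B := Uset j)) => [|i]; last by rewrite inE.
by rewrite mulr_natl subrr mul0r.
Qed.

End FullParticipation.

Theorem theorem1 (R : realFieldType) (n m N : nat)
  (l : 'I_n -> seq 'I_m) (c : 'I_m -> nat) (d : nat -> 'I_n -> bool)
  (L : nat -> 'I_n -> seq 'I_m) (T : nat) :
  (forall i, uniq (l i)) ->
  (forall t i, d t i = true) ->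
  (forall t, (t <= T)%N -> ffast_round R N l c d L t) ->
  (forall j : 'I_m, [exists i, inU N l j i] -> 0 < overall_prob R N l d L T j) ->
  \sum_(i < n) topN_fairness R N l d L T i = 0.
Proof.
move=> l_uniq full _ _.
rewrite /topN_fairness sum_topN_exchange // big1 // => j _.
exact: sum_fairness_degree_service.
Qed.
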